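(* For a nonempty finite set $S=\{i_1<i_2<\cdots<i_k\}$ of positive integers define the polynomial $$r_S(x_1,x_2,\ldots) = (x_{i_2} + \cdots + x_{i_k} - 1)(x_{i_3} + \cdots + x_{i_k} - 1) \cdots (x_{i_{k-1}}+x_{i_k} - 1) (x_{i_k} - 1)$$ (so $r_S=1$ when $|S|=1$). Let $n\ge 2$, let $\mathbf x$ denote the variables $x_1,x_2,\ldots$ and $\mathbf x/2$ denote $x_1/2,x_2/2,\ldots$. Then $$r_{[n]}(\mathbf x) = 2^{n-1} r_{[n]}(\mathbf x/2) + \sum_{1 \in S \subsetneq [n]} r_S(\mathbf x) \cdot r_{[n] \setminus S}(\mathbf x),$$ where $[n]=\{1,\dots,n\}$ and the sum is over all proper subsets $S$ of $[n]$ containing $1$. *)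

From mathcomp Require Import all_boot all_order all_algebra.
Set Implicit Arguments. Unset Strict Implicit. Unset Printing Implicit Defensive.
Import Order.TTheory GRing.Theory Num.Theory.
Local Open Scope ring_scope.

Fixpoint rseq (R : nzRingType) (s : seq nat) (x : nat -> R) : R :=
  match s with
  | [::] => 1
  | _ :: t => match t with
              | [::] => 1
              | _ :: _ => (\sum_(j <- t) x j - 1) * rseq t x
              end
  end.

(* A subset S of [n] = {1,...,n} is encoded as S : {set 'I_n}, ordinal i
   standing for the positive integer i+1.  r_S(x) evaluated at x : nat -> R
   (x j is the value of the variable x_j, j >= 1). *)
Definition rset (R : nzRingType) (n : nat) (S : {set 'I_n}) (x : nat -> R) : R :=
  rseq (sort leq [seq (val i).+1 | i <- enum S]) x.

From mathcomp Require Import all_boot all_order all_algebra.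
From mathcomp Require Import ring.
Import Order.TTheory GRing.Theory Num.Theory.
Local Open Scope ring_scope.
Set Implicit Arguments. Unset Strict Implicit. Unset Printing Implicit Defensive.

(* Write rho(T) for r_{{1} ∪ T} with T ⊆ {2,...,n}, and sigma(T) for the sum
   of the x_i over T.  Peeling off the least element t of T gives
   rho(T) = (sigma(T) - 1) rho(T \ t), and likewise
   2^|T| rho(x/2)(T) = (sigma(T) - 2) 2^|T\t| rho(x/2)(T \ t).  The sum G(T) over
   nonempty B ⊆ T of rho(T \ B) r_B is the sum of the theorem, indexed by the
   complement B of S.  Splitting it according to whether t ∈ B, and using
   sigma(B) r_B = rho(B) + r_B for the terms with t ∉ B, yields
   G(T) = rho(T \ t) + (sigma(T) - 2) G(T \ t), so G(T) and
   rho(T) - 2^|T| rho(x/2)(T) satisfy the same recursion and both vanish at T = ∅. *)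

Section PeelMinimum.
Variables (R : comNzRingType) (n : nat).
Implicit Types (S T B : {set 'I_n}) (x : nat -> R).

Definition indices S := sort leq [seq (val i).+1 | i <- enum S].

(* r of S with a dummy least index prepended; [rseq] never reads its first index. *)
Definition rset0 x S := rseq (0%N :: indices S) x.

Definition sumx x S := \sum_(i in S) x (val i).+1.

Lemma exists_min_ord S : S != set0 ->
  exists2 t, t \in S & {in S, forall j : 'I_n, (t <= j)%N}.
Proof.
by case/set0Pn=> i iS; case: (arg_minnP (fun j : 'I_n => val j) iS) => t; exists t.
Qed.

Lemma indices_min S t : t \in S -> {in S, forall j : 'I_n, (t <= j)%N} ->
  indices S = (val t).+1 :: indices (S :\ t).
Proof.
move=> tS tmin; apply: (sorted_eq leq_trans anti_leq).
- exact: sort_sorted leq_total _.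
- rewrite /= path_sortedE; last exact: leq_trans.
  rewrite sort_sorted ?andbT; last exact: leq_total.
  apply/allP=> k; rewrite mem_sort => /mapP [j].
  by rewrite mem_enum !inE => /andP [_ jS] ->; rewrite ltnS tmin.
- rewrite /indices perm_sort.
  apply: (@perm_trans _ ((val t).+1 :: [seq (val i).+1 | i <- enum (S :\ t)])).
    rewrite -[_ :: _]/(map (fun i : 'I_n => (val i).+1) (t :: enum (S :\ t))).
    apply: perm_map; apply: uniq_perm.
    + exact: enum_uniq.
    + by rewrite /= mem_enum !inE eqxx enum_uniq.
    + by move=> j; rewrite in_cons !mem_enum !inE; case: eqP => [->|].
  by rewrite perm_cons perm_sym perm_sort.
Qed.

Lemma sum_indices x S : \sum_(j <- indices S) x j = sumx x S.
Proof. by rewrite /indices (perm_big _ (permEl (perm_sort _ _))) big_map big_enum. Qed.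

Lemma rset_min x S t : t \in S -> {in S, forall j : 'I_n, (t <= j)%N} ->
  rset S x = rset0 x (S :\ t).
Proof. by move=> tS tmin; rewrite /rset -/(indices S) (indices_min tS tmin). Qed.

Lemma rset0_min x S t : t \in S -> {in S, forall j : 'I_n, (t <= j)%N} ->
  rset0 x S = (sumx x S - 1) * rset0 x (S :\ t).
Proof.
move=> tS tmin; rewrite {1}/rset0 (indices_min tS tmin) /= -(indices_min tS tmin).
by rewrite sum_indices.
Qed.

Lemma rset0_set0 x : rset0 x set0 = 1.
Proof. by rewrite /rset0 /indices enum_set0. Qed.

Lemma sumx_setD x T B : B \subset T -> sumx x (T :\: B) = sumx x T - sumx x B.
Proof. by move=> BT; rewrite [sumx x T](big_setID B) /= (setIidPr BT) addrC addrK. Qed.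

Lemma sumx_mul_rset x B : B != set0 -> sumx x B * rset B x = rset0 x B + rset B x.
Proof.
by case/exists_min_ord=> b bB bmin; rewrite (rset_min _ bB bmin) (rset0_min _ bB bmin); ring.
Qed.

Definition rsplit x T :=
  \sum_(B : {set 'I_n} | (B \subset T) && (B != set0)) rset0 x (T :\: B) * rset B x.

Section SplitAtMinimum.
Variables (x : nat -> R) (T : {set 'I_n}) (t : 'I_n).
Hypotheses (tT : t \in T) (tmin : {in T, forall j : 'I_n, (t <= j)%N}).

Let T' := T :\ t.

Lemma setD_setD1 B : T :\: B :\ t = T' :\: B.
Proof. by apply/setP=> i; rewrite !inE andbCA. Qed.

Lemma rsplit_with_min :
  \sum_(B : {set 'I_n} | (B \subset T) && (B != set0) && (t \in B)) rset0 x (T :\: B) * rset B x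
  = \sum_(B : {set 'I_n} | B \subset T') rset0 x (T' :\: B) * rset0 x B.
Proof.
rewrite (reindex_onto (fun B => t |: B) (fun B => B :\ t)) /=; last first.
  by move=> B /andP [_ tB]; rewrite setD1K.
apply: eq_big => B.
  rewrite setU11 andbT subsetD1 subUset sub1set tT /=.
  have -> : (t |: B != set0) by apply/set0Pn; exists t; rewrite setU11.
  rewrite andbT; case: (boolP (t \in B)) => tB; last by rewrite setU1K ?eqxx ?andbT.
  by rewrite andbF; apply/negbTE/negP => /andP [_ /eqP eB]; rewrite -eB !inE eqxx in tB.
move=> /andP [/andP [/andP [BT _] _] /eqP eB].
have tB : t \notin B by rewrite -eB !inE eqxx.
rewrite -setDDl -/T' (@rset_min x (t |: B) t) ?setU11 ?eB // => j.
rewrite !inE => /orP [/eqP -> //|jB].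
by apply: tmin; apply: (subsetP BT); rewrite inE jB orbT.
Qed.

Lemma rsplit_without_min :
  \sum_(B : {set 'I_n} | (B \subset T) && (B != set0) && (t \notin B)) rset0 x (T :\: B) * rset B x
  = \sum_(B : {set 'I_n} | (B \subset T') && (B != set0))
      ((sumx x T - 1) - sumx x B) * (rset0 x (T' :\: B) * rset B x).
Proof.
apply: eq_big => [B|B /andP [/andP [BT _] tB]]; first by rewrite subsetD1 andbAC.
rewrite (@rset0_min x (T :\: B) t); first last.
- by move=> j; rewrite !inE => /andP [_ jT]; apply: tmin.
- by rewrite !inE tB tT.
by rewrite setD_setD1 sumx_setD // mulrA; congr (_ * _ * _); ring.
Qed.

Lemma rsplit_min : rsplit x T = rset0 x T' + (sumx x T - 2%:R) * rsplit x T'.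
Proof.
rewrite /rsplit (bigID (fun B => t \in B)) /= rsplit_with_min rsplit_without_min.
rewrite (bigD1 set0) ?sub0set //= setD0 rset0_set0 mulr1.
rewrite mulr_sumr -addrA -big_split /=; congr (_ + _); apply: eq_bigr => B /andP [_ B0].
have := sumx_mul_rset x B0.
set p := rset0 x (T' :\: B); set q := rset0 x B; set r := rset B x => e.
transitivity ((sumx x T - 1) * (p * r) - p * (sumx x B * r) + p * q); first ring.
by rewrite e; ring.
Qed.

End SplitAtMinimum.
End PeelMinimum.

Section HalvedVariables.
Variables (R : numFieldType) (n : nat).
Implicit Types (T : {set 'I_n}) (x : nat -> R).

Definition rset0_half x T := 2%:R ^+ #|T| * rset0 (fun j => x j / 2%:R) T.

Lemma rset0_half_min x T t : t \in T -> {in T, forall j : 'I_n, (t <= j)%N} ->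
  rset0_half x T = (sumx x T - 2%:R) * rset0_half x (T :\ t).
Proof.
move=> tT tmin; rewrite /rset0_half (cardsD1 t T) tT (rset0_min _ tT tmin) add1n exprS.
have -> : sumx (fun j => x j / 2%:R) T = sumx x T / 2%:R by rewrite /sumx mulr_suml.
have two_neq0 : (2%:R : R) != 0 by rewrite pnatr_eq0.
by field.
Qed.

Lemma rsplit_eq x T : rsplit x T = rset0 x T - rset0_half x T.
Proof.
move: {2}#|T| (erefl #|T|) => k; elim: k T => [|k IH] T cardT.
  move/eqP: cardT; rewrite cards_eq0 => /eqP ->.
  rewrite /rsplit big_pred0 => [|B]; last by rewrite subset0 andbN.
  by rewrite /rset0_half cards0 expr0 mul1r !rset0_set0 subrr.
have [|t tT tmin] := exists_min_ord (S := T); first by rewrite -card_gt0 cardT.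
have cardT' : #|T :\ t| = k by move: cardT; rewrite (cardsD1 t T) tT add1n => -[].
rewrite (rsplit_min x tT tmin) IH // (rset0_min _ tT tmin) (rset0_half_min _ tT tmin).
ring.
Qed.

End HalvedVariables.

Lemma rset_properT_complement (R : comNzRingType) (m : nat) (x : nat -> R) :
  \sum_(S : {set 'I_m.+1} | (S \proper [set: 'I_m.+1]) && [exists i in S, val i == 0%N])
      rset S x * rset (~: S) x
  = rsplit x ([set: 'I_m.+1] :\ ord0).
Proof.
rewrite (reindex_inj (@setC_inj _)) /=; apply: eq_big => B.
  rewrite properT -setC0 (inj_eq (@setC_inj _)) subsetD1 setC0 subsetT andbC /=.
  congr (_ && _); apply/existsP/idP => [[i /andP [iB /eqP i0]]|B0].
    by move: iB; rewrite (_ : i = ord0) ?inE //; apply: val_inj.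
  by exists ord0; rewrite inE B0 eqxx.
move=> /andP [_ /existsP [i /andP [iB /eqP i0]]].
have B0 : ord0 \in ~: B by rewrite -(_ : i = ord0) //; apply: val_inj.
rewrite setCK (rset_min _ B0) //; congr (rset0 _ _ * _).
by apply/setP=> j; rewrite !inE andbT andbC.
Qed.

Theorem lemma3p2 (R : numFieldType) (n : nat) (hn : (2 <= n)%N) (x : nat -> R) :
  rset [set: 'I_n] x =
    2%:R ^+ n.-1 * rset [set: 'I_n] (fun j => x j / 2%:R)
    + \sum_(S : {set 'I_n} | (S \proper [set: 'I_n]) && [exists i in S, val i == 0%N])
        rset S x * rset (~: S) x.
Proof.
case: n hn x => [//|m] _ x.
set T := [set: 'I_m.+1] :\ ord0.
have ord0_min : {in [set: 'I_m.+1], forall j : 'I_m.+1, (@ord0 m <= j)%N} by [].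
have cardT : #|T| = m.
  by have := cardsD1 ord0 [set: 'I_m.+1]; rewrite cardsT card_ord inE add1n => -[].
rewrite rset_properT_complement rsplit_eq !(rset_min _ (in_setT ord0) ord0_min) -/T.
have -> : 2%:R ^+ m.+1.-1 * rset0 (fun j => x j / 2%:R) T = rset0_half x T.
  by rewrite /rset0_half cardT.
by rewrite addrC subrK.
Qed.
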